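(* Let $k\ge 2$, let $G$ be any finite simple graph, and let $H$ be a finite simple graph admitting a closed neighborhood balanced $k$-coloring $c$ with $|c^{-1}(1)|=|c^{-1}(2)|=\dots=|c^{-1}(k)|$. Then the lexicographic product $G[H]$ admits a closed neighborhood balanced $k$-coloring.
   Context: For a vertex $v$, $N[v]=\{v\}\cup\{u : uv\in E\}$. A closed neighborhood balanced $k$-coloring of a graph is a map $c: V\to\{1,\dots,k\}$ such that for every vertex $v$ the numbers $|\{u\in N[v] : c(u)=i\}|$, $i=1,\dots,k$, are all equal. The lexicographic product $G[H]$ has vertex set $V(G)\times V(H)$, with $(g,h)$ adjacent to $(g',h')$ iff $gg'\in E(G)$, or $g=g'$ and $hh'\in E(H)$. *)

From mathcomp Require Import all_boot.
Set Implicit Arguments. Unset Strict Implicit. Unset Printing Implicit Defensive.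

Definition simple_graph (V : finType) (e : rel V) : Prop :=
  symmetric e /\ irreflexive e.

Definition closed_nbhd (V : finType) (e : rel V) (v : V) : {set V} :=
  [set u | (u == v) || e v u].

(* Colors {1,...,k} are represented by 'I_k = {0,...,k-1}. *)
Definition cnb_coloring (V : finType) (e : rel V) (k : nat) (c : V -> 'I_k) : Prop :=
  forall (v : V) (i j : 'I_k),
    #|[set u in closed_nbhd e v | c u == i]| = #|[set u in closed_nbhd e v | c u == j]|.

Definition lex_prod (V W : finType) (eG : rel V) (eH : rel W) : rel (V * W) :=
  fun x y => eG x.1 y.1 || ((x.1 == y.1) && eH x.2 y.2).

From mathcomp Require Import all_boot.

(* Colour (g, h) by the colour of h. The closed neighbourhood of (g, h) in
   G[H] is the copy of N_H[h] in the fibre over g together with the full fibres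
   over the G-neighbours of g; the first part is balanced because c is, and each
   full fibre is balanced because the colour classes of c have equal size. *)

Section LexProdNeighbourhood.

Variables (V W : finType) (eG : rel V) (eH : rel W).
Hypothesis irrG : irreflexive eG.

Lemma closed_nbhd_lex_prod (x : V * W) :
  closed_nbhd (lex_prod eG eH) x =
  setX [set x.1] (closed_nbhd eH x.2) :|: setX [set g | eG x.1 g] [set: W].
Proof.
case: x => g h; apply/setP => -[g' h']; rewrite !inE /lex_prod /= xpair_eqE.
by case: (eqVneq g' g) => [->|_] /=; rewrite ?irrG !andbT ?orbF.
Qed.

Lemma card_closed_nbhd_lex_prod_snd (x : V * W) (P : pred W) :
  #|[set u in closed_nbhd (lex_prod eG eH) x | P u.2]| =
  #|[set w in closed_nbhd eH x.2 | P w]| +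
  #|[set g | eG x.1 g]| * #|[set w | P w]|.
Proof.
have -> : [set u in closed_nbhd (lex_prod eG eH) x | P u.2] =
    setX [set x.1] [set w in closed_nbhd eH x.2 | P w]
    :|: setX [set g | eG x.1 g] [set w | P w].
  apply/setP => -[g h]; rewrite closed_nbhd_lex_prod !inE /=.
  by rewrite andb_orl andbT andbA.
have disj : setX [set x.1] [set w in closed_nbhd eH x.2 | P w]
              :&: setX [set g | eG x.1 g] [set w | P w] = set0.
  apply/setP => -[g h]; rewrite !inE /=.
  by case: (eqVneq g x.1) => [->|]; rewrite ?irrG ?andbF.
by rewrite cardsU disj cards0 subn0 !cardsX cards1 mul1n.
Qed.

Lemma cnb_coloring_lex_prod (k : nat) (c : W -> 'I_k) :
  cnb_coloring eH c ->
  (forall i j : 'I_k, #|[set w | c w == i]| = #|[set w | c w == j]|) ->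
  cnb_coloring (lex_prod eG eH) (fun u => c u.2).
Proof.
move=> cH eq_classes x i j.
rewrite !(card_closed_nbhd_lex_prod_snd x (fun w => c w == _)).
by rewrite (cH x.2 i j) (eq_classes i j).
Qed.

End LexProdNeighbourhood.

Theorem theorem2p20 (k : nat) (V W : finType) (eG : rel V) (eH : rel W)
    (c : W -> 'I_k) :
  2 <= k ->
  simple_graph eG ->
  simple_graph eH ->
  cnb_coloring eH c ->
  (forall i j : 'I_k, #|[set w | c w == i]| = #|[set w | c w == j]|) ->
  exists c' : V * W -> 'I_k, cnb_coloring (lex_prod eG eH) c'.
Proof.
move=> _ [_ irrG] _ cH eq_classes.
by exists (fun u => c u.2); apply: cnb_coloring_lex_prod.
Qed.
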